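(* Let $\mu$ and $\nu$ be positive Borel measures on $\mathbb{R}$ of infinite support with finite moments, both determinate (so polynomials are dense in $L^2(\mu)$ and $L^2(\nu)$), and suppose $d\mu=r\,d\nu$ for a real polynomial $r$ of degree $1$. Let $\Phi_n$ (resp. $\phi_n$) be the orthonormal polynomials of degree $n$ for $\mu$ (resp. $\nu$). Let $L$ be a self-adjoint operator on $L^2(\mu)$ with domain the polynomials $\mathcal{P}$ (i.e. symmetric on $\mathcal{P}$) such that $L\Phi_n=\Lambda_n\Phi_n$ with $\Lambda_n\in\mathbb{R}$, and let $\gamma$ be a constant. Then the operator $T=r(L+\gamma)$ with domain $\mathcal{P}$ on $L^2(\nu)$ (where $r$ denotes multiplication by $r$) is tridiagonal with respect to $\{\phi_n\}_{n\in\mathbb{N}}$: $\langle T\phi_n,\phi_m\rangle_{L^2(\nu)}=0$ whenever $|n-m|>1$, i.e. $T\phi_n$ is a linear combination of $\phi_{n-1},\phi_n,\phi_{n+1}$.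
   Context: Here $d\mu=r\,d\nu$ means $\int f\,d\mu=\int fr\,d\nu$ for all integrable $f$; orthonormal polynomials have real coefficients and positive leading coefficient, with $\phi_{-1}=0$. *)

From HB Require Import structures.
From mathcomp Require Import all_boot all_order all_algebra.
From mathcomp Require Import all_classical all_reals all_analysis.
Set Implicit Arguments. Unset Strict Implicit. Unset Printing Implicit Defensive.
Import Order.TTheory GRing.Theory Num.Theory.
Import numFieldNormedType.Exports.
Local Open Scope classical_set_scope.
Local Open Scope ring_scope.

Definition finite_moments (R : realType) (mu : {measure set R -> \bar R}) :=
  forall k : nat, mu.-integrable setT (fun x : R => (x ^+ k)%:E).

Definition moment (R : realType) (mu : {measure set R -> \bar R}) (k : nat) :=
  (\int[mu]_x (x ^+ k)%:E)%E.

Definition msupport (R : realType) (mu : {measure set R -> \bar R}) : set R :=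
  [set x | forall e : R, 0 < e -> (0 < mu (ball x e))%E].

Definition infinite_support (R : realType) (mu : {measure set R -> \bar R}) :=
  ~ finite_set (msupport mu).

Definition determinate (R : realType) (mu : {measure set R -> \bar R}) :=
  forall nu : {measure set R -> \bar R},
    finite_moments nu -> (forall k, moment nu k = moment mu k) ->
    forall A, measurable A -> nu A = mu A.

Definition has_density (R : realType) (mu nu : {measure set R -> \bar R})
    (r : {poly R}) :=
  forall f : R -> R, mu.-integrable setT (EFin \o f) ->
    (\int[mu]_x (f x)%:E = \int[nu]_x (f x * r.[x])%:E)%E.

Definition ipoly (R : realType) (mu : {measure set R -> \bar R}) (p q : {poly R}) :=
  (\int[mu]_x (p.[x] * q.[x])%:E)%E.

Definition orthonormal_polys (R : realType) (mu : {measure set R -> \bar R})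
    (Phi : nat -> {poly R}) :=
  (forall n, size (Phi n) = n.+1) /\
  (forall n, 0 < lead_coef (Phi n)) /\
  (forall n m, ipoly mu (Phi n) (Phi m) = ((n == m)%:R)%:E).

From HB Require Import structures.
From mathcomp Require Import all_boot all_order all_algebra.
From mathcomp Require Import all_classical all_reals all_analysis.
From mathcomp Require Import zify.
Set Implicit Arguments. Unset Strict Implicit.
Import Order.TTheory GRing.Theory Num.Theory.
Local Open Scope ring_scope.

(* Let A := L + gamma. Since L is diagonal in the graded basis Phi, A does not
   raise degrees, and it is symmetric in L^2(mu). Hence T phi_n = r A phi_n has
   degree at most n + 2 and is orthogonal in L^2(nu) to phi_m for m >= n + 2.
   For m <= n - 2, absorbing r into the measure and moving A across gives
   <r A phi_n, phi_m>_nu = <phi_n, A phi_m>_mu = <r A phi_m, phi_n>_nu,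
   which vanishes for the same reason. Expanding T phi_n in the orthonormal
   basis phi then leaves only the coefficients of phi_(n-1), phi_n, phi_(n+1). *)

Section GradedBasis.
Variable F : fieldType.

Lemma size_sub_lead_scale (p q : {poly F}) n :
  (size p <= n.+1)%N -> size q = n.+1 ->
  (size (p - (p`_n / lead_coef q) *: q)%R <= n)%N.
Proof.
move=> hp hq; have lq : lead_coef q != 0 by rewrite lead_coef_eq0 -size_poly_eq0 hq.
apply/leq_sizeP => i; rewrite leq_eqVlt => /predU1P[<-|lt_ni].
  have q_n : q`_n = lead_coef q by rewrite /lead_coef hq.
  by rewrite coefB coefZ q_n divfK ?subrr.
by rewrite coefB coefZ [q`_i]nth_default ?hq // mulr0 subr0 nth_default // (leq_trans hp).
Qed.

Variable Phi : nat -> {poly F}.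
Hypothesis size_Phi : forall n, size (Phi n) = n.+1.

Lemma span_graded_basis N (p : {poly F}) :
  (size p <= N)%N -> exists c : nat -> F, p = \sum_(i < N) c i *: Phi i.
Proof.
elim: N p => [|N IH] p hp.
  by exists (fun=> 0); move: hp; rewrite leqn0 size_poly_eq0 big_ord0 => /eqP.
set c := p`_N / lead_coef (Phi N).
have [d hd] := IH _ (size_sub_lead_scale hp (size_Phi N)).
exists (fun i => if i == N then c else d i).
rewrite big_ord_recr /= eqxx -[LHS](subrK (c *: Phi N)) {1}hd.
by congr (_ + _); apply: eq_bigr => i _; rewrite ltn_eqF.
Qed.

Lemma size_eigen_graded (L : {linear {poly F} -> {poly F}}) (Lambda : nat -> F) :
  (forall n, L (Phi n) = Lambda n *: Phi n) ->
  forall p, (size (L p) <= size p)%N.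
Proof.
move=> hL p; have [c {1}->] := span_graded_basis (leqnn (size p)).
rewrite linear_sum; apply: leq_trans (size_sum _ _ _) _.
apply/bigmax_leqP => i _; rewrite linearZ /= hL.
by rewrite (leq_trans (size_scale_leq _ _)) // (leq_trans (size_scale_leq _ _)) ?size_Phi.
Qed.

End GradedBasis.

Section InnerProduct.
Variables (R : realType) (mu : {measure set R -> \bar R}).
Hypothesis fm : finite_moments mu.

Lemma poly_integrable (p : {poly R}) : mu.-integrable setT (fun x => (p.[x])%:E).
Proof.
under eq_fun do rewrite horner_coef -sumEFin.
by apply: integrable_sum => // i _; under eq_fun do rewrite EFinM; exact: integrableZl.
Qed.

Definition inner (p q : {poly R}) : R := fine (ipoly mu p q).

Lemma ipoly_inner p q : ipoly mu p q = (inner p q)%:E.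
Proof.
rewrite /inner fineK // /ipoly; under eq_fun do rewrite -hornerM.
exact/integrable_fin_num/poly_integrable.
Qed.

Lemma innerC p q : inner p q = inner q p.
Proof. by rewrite /inner /ipoly; under eq_integral do rewrite mulrC. Qed.

Lemma innerDl p q s : inner (p + q) s = inner p s + inner q s.
Proof.
apply: EFin_inj; rewrite EFinD -!ipoly_inner /ipoly.
under eq_integral do rewrite hornerD mulrDl EFinD.
by apply: integralD => //; under eq_fun do rewrite -hornerM; exact: poly_integrable.
Qed.

Lemma innerZl a p s : inner (a *: p) s = a * inner p s.
Proof.
apply: EFin_inj; rewrite EFinM -!ipoly_inner /ipoly.
under eq_integral do rewrite hornerZ -mulrA EFinM.
by apply: integralZl => //; under eq_fun do rewrite -hornerM; exact: poly_integrable.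
Qed.

Lemma inner_suml I (s : seq I) (P : pred I) (F : I -> {poly R}) q :
  inner (\sum_(i <- s | P i) F i) q = \sum_(i <- s | P i) inner (F i) q.
Proof.
elim/big_rec2: _ => [|i _ p _ <-]; last exact: innerDl.
by rewrite -(scale0r (0 : {poly R})) innerZl mul0r.
Qed.

End InnerProduct.

Section Orthonormal.
Variables (R : realType) (mu : {measure set R -> \bar R}) (phi : nat -> {poly R}).
Hypotheses (fm : finite_moments mu) (on_phi : orthonormal_polys mu phi).

Lemma inner_orthonormal n m : inner mu (phi n) (phi m) = (n == m)%:R.
Proof. by case: on_phi => _ [_ h]; rewrite /inner h. Qed.

Lemma inner_combination N (c : nat -> R) k :
  inner mu (\sum_(i < N) c i *: phi i) (phi k) = if (k < N)%N then c k else 0.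
Proof.
rewrite inner_suml // (eq_bigr (fun i : 'I_N => if i == k :> nat then c i else 0)).
  by rewrite -big_mkcond big_ord1_eq.
by move=> i _; rewrite innerZl // inner_orthonormal mulr_natr mulrb.
Qed.

Lemma orthonormal_expansion N (p : {poly R}) : (size p <= N)%N ->
  p = \sum_(k < N) inner mu p (phi k) *: phi k.
Proof.
case: on_phi => size_phi _ /(span_graded_basis size_phi)[c pE].
by rewrite {1}pE; apply: eq_bigr => k _; rewrite pE inner_combination ltn_ord.
Qed.

Lemma inner_orthonormal_size_le (p : {poly R}) m :
  (size p <= m)%N -> inner mu p (phi m) = 0.
Proof.
case: on_phi => size_phi _ /(span_graded_basis size_phi)[c ->].
by rewrite inner_combination ltnn.
Qed.

Lemma tridiagonal_of_orthogonal n (t : {poly R}) :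
  (size t <= n.+2)%N -> (forall k, (k.+1 < n)%N -> inner mu t (phi k) = 0) ->
  exists a b c : R,
    t = a *: (if n is n'.+1 then phi n' else 0) + b *: phi n + c *: phi n.+1.
Proof.
move=> size_t t_orth; rewrite (orthonormal_expansion size_t).
case: n {size_t} t_orth => [|n] t_orth.
  exists 0, (inner mu t (phi 0)), (inner mu t (phi 1)).
  by rewrite !big_ord_recr big_ord0 /= scaler0 !add0r.
exists (inner mu t (phi n)), (inner mu t (phi n.+1)), (inner mu t (phi n.+2)).
rewrite !big_ord_recr /= big1 ?add0r // => i _.
by rewrite t_orth ?scale0r // ltnS.
Qed.

End Orthonormal.

Lemma inner_density (R : realType) (mu nu : {measure set R -> \bar R}) r :
  finite_moments mu -> has_density mu nu r ->
  forall p q, inner mu p q = inner nu (r * p) q.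
Proof.
move=> fm dens p q; rewrite /inner /ipoly.
have := dens _ (poly_integrable fm (p * q)); under eq_integral do rewrite hornerM.
by move=> ->; congr fine; apply: eq_integral => x _; rewrite !hornerM mulrC mulrA.
Qed.

Section Tridiagonal.
Variables (R : realType) (mu nu : {measure set R -> \bar R}).
Variables (r : {poly R}) (phi : nat -> {poly R}) (A : {poly R} -> {poly R}).
Hypotheses (fm : finite_moments mu) (fn : finite_moments nu).
Hypotheses (size_r : (size r <= 2)%N) (dens : has_density mu nu r).
Hypothesis on_phi : orthonormal_polys nu phi.
Hypothesis A_sym : forall p q, inner mu (A p) q = inner mu p (A q).
Hypothesis A_size : forall p, (size (A p) <= size p)%N.

Lemma size_mul_r_A k : (size (r * A (phi k))%R <= k.+2)%N.
Proof.
case: on_phi => size_phi _; apply: leq_trans (size_polyMleq _ _) _.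
by have := A_size (phi k); rewrite size_phi; lia.
Qed.

Lemma inner_mul_r_A_far n m : (1 < `|(n%:Z - m%:Z)%R|)%N ->
  inner nu (r * A (phi n)) (phi m) = 0.
Proof.
move=> far; have [le_nm|le_mn] : (n.+2 <= m)%N \/ (m.+2 <= n)%N by lia.
  exact/(inner_orthonormal_size_le fn on_phi)/(leq_trans (size_mul_r_A n)).
rewrite -(inner_density fm dens) A_sym innerC (inner_density fm dens).
exact/(inner_orthonormal_size_le fn on_phi)/(leq_trans (size_mul_r_A m)).
Qed.

End Tridiagonal.

Theorem lemma6p1 (R : realType) (mu nu : {measure set R -> \bar R})
  (r : {poly R}) (Phi phi : nat -> {poly R})
  (L : {linear {poly R} -> {poly R}}) (Lambda : nat -> R) (gamma : R) :
  finite_moments mu -> finite_moments nu ->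
  infinite_support mu -> infinite_support nu ->
  determinate mu -> determinate nu ->
  size r = 2%N ->
  has_density mu nu r ->
  orthonormal_polys mu Phi -> orthonormal_polys nu phi ->
  (forall p q : {poly R}, ipoly mu (L p) q = ipoly mu p (L q)) ->
  (forall n, L (Phi n) = Lambda n *: Phi n) ->
  let T := fun p : {poly R} => r * (L p + gamma *: p) in
  (forall n m : nat, (1 < `|(n%:Z - m%:Z)%R|)%N ->
     ipoly nu (T (phi n)) (phi m) = 0%E) /\
  (forall n : nat, exists a b c : R,
     T (phi n) = a *: (if n is n'.+1 then phi n' else 0)
                 + b *: phi n + c *: phi n.+1).
Proof.
(* Infinite support and determinacy only guarantee that Phi and phi exist. *)
move=> fm fn _ _ _ _ size_r dens [size_Phi _] on_phi L_sym L_eigen T.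
pose A p := L p + gamma *: p.
have A_size p : (size (A p) <= size p)%N.
  rewrite (leq_trans (size_polyD _ _)) // geq_max size_scale_leq andbT.
  exact (size_eigen_graded size_Phi L_eigen p).
have L_sym' p q : inner mu (L p) q = inner mu p (L q) by rewrite /inner L_sym.
have A_sym p q : inner mu (A p) q = inner mu p (A q).
  rewrite [RHS]innerC !innerDl // !innerZl // L_sym'.
  by rewrite (innerC _ p (L q)) (innerC _ q p).
have r_le2 : (size r <= 2)%N by rewrite size_r.
have far := inner_mul_r_A_far fm fn r_le2 dens on_phi A_sym A_size.
split => [n m /far|n]; first by rewrite ipoly_inner // => ->.
apply: (tridiagonal_of_orthogonal fn on_phi) => [|k lt_kn].
  exact: size_mul_r_A r_le2 on_phi A_size n.
by apply: far; lia.
Qed.
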